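(* Let $L$ be a $3$-dimensional $\mathbb{Z}_p$-Lie lattice such that $[L,L]$ has rank $1$. Then $L$ is not self-similar of index $p$.
   Context: $p$ is any prime. A $\mathbb{Z}_p$-Lie lattice is a $\mathbb{Z}_p$-Lie algebra whose underlying module is finitely generated and free; dimension means rank. A virtual endomorphism of $L$ is a homomorphism of algebras $\varphi:M\to L$ with $M\subseteq L$ a finite-index subalgebra, of index $[L:M]$. An ideal $I$ of $L$ is $\varphi$-invariant if it lies in the domain of every power of $\varphi$ and $\varphi(I)\subseteq I$; $\varphi$ is simple if no non-zero ideal is $\varphi$-invariant. $L$ is self-similar of index $p^k$ if it has a simple virtual endomorphism of index $p^k$. *)

From HB Require Import structures.
From mathcomp Require Import all_boot all_order all_algebra.
From mathcomp Require Import boolp.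
Set Implicit Arguments. Unset Strict Implicit. Unset Printing Implicit Defensive.
Import Order.TTheory GRing.Theory Num.Theory.
Local Open Scope ring_scope.

(* The ring Z_p of p-adic integers, as the inverse limit of the Z/p^nZ:     *)
(* a p-adic integer is a compatible sequence (x_n)_n of residues,            *)
(* x_n in [0, p^n), with x_{n+1} = x_n mod p^n.                              *)

Definition pmod (p n : nat) : int := (p ^ n)%N%:Z.

Record padic (p : nat) := Padic {
  pval : nat -> int ;
  pvalP : forall n, modz (pval n.+1) (pmod p n) = pval n }.

Lemma modz_mulmod (x a b : int) : modz (modz x (a * b)) a = modz x a.
Proof.
by rewrite [in RHS](divz_eq x (a * b)) mulrA mulrAC modzMDl.
Qed.

Lemma pmodS p n : pmod p n.+1 = pmod p n * p%:Z.
Proof. by rewrite /pmod expnSr PoszM. Qed.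

Section Padic.
Variable p : nat.
Local Notation Zp := (padic p).

Lemma pval_red (x : Zp) n : modz (pval x n) (pmod p n) = pval x n.
Proof. by rewrite -(pvalP x n) modz_mod. Qed.

Lemma padic_inj (x y : Zp) : (forall n, pval x n = pval y n) -> x = y.
Proof.
case: x => f fP; case: y => g gP /= efg.
have e : f = g by apply: funext.
subst g; congr Padic; exact: Prop_irrelevance.
Qed.

Lemma pred_compat (F : nat -> int) :
  (forall n, (F n.+1 = F n %[mod pmod p n])%Z) ->
  forall n, modz (modz (F n.+1) (pmod p n.+1)) (pmod p n) = modz (F n) (pmod p n).
Proof. by move=> FP n; rewrite pmodS modz_mulmod FP. Qed.

Definition padic_of (F : nat -> int)
  (FP : forall n, (F n.+1 = F n %[mod pmod p n])%Z) : Zp :=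
  @Padic p (fun n => modz (F n) (pmod p n)) (pred_compat FP).

Lemma padic_ofE F FP n : pval (@padic_of F FP) n = modz (F n) (pmod p n).
Proof. by []. Qed.

Lemma zero_compat n : ((0 : int) = 0 %[mod pmod p n])%Z. Proof. by []. Qed.
Lemma one_compat n : ((1 : int) = 1 %[mod pmod p n])%Z. Proof. by []. Qed.
Lemma opp_compat (x : Zp) n : (- pval x n.+1 = - pval x n %[mod pmod p n])%Z.
Proof. by rewrite -modzNm pvalP. Qed.
Lemma add_compat (x y : Zp) n :
  (pval x n.+1 + pval y n.+1 = pval x n + pval y n %[mod pmod p n])%Z.
Proof. by rewrite -modzDm !pvalP. Qed.
Lemma mul_compat (x y : Zp) n :
  (pval x n.+1 * pval y n.+1 = pval x n * pval y n %[mod pmod p n])%Z.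
Proof. by rewrite -modzMm !pvalP. Qed.

Definition pzero : Zp := padic_of zero_compat.
Definition pone : Zp := padic_of one_compat.
Definition popp (x : Zp) : Zp := padic_of (opp_compat x).
Definition padd (x y : Zp) : Zp := padic_of (add_compat x y).
Definition pmul (x y : Zp) : Zp := padic_of (mul_compat x y).

Lemma paddA : associative padd.
Proof.
move=> x y z; apply: padic_inj => n; rewrite !padic_ofE.
by rewrite modzDml modzDmr addrA.
Qed.
Lemma paddC : commutative padd.
Proof. by move=> x y; apply: padic_inj => n; rewrite !padic_ofE addrC. Qed.
Lemma padd0 : left_id pzero padd.
Proof. by move=> x; apply: padic_inj => n; rewrite !padic_ofE modzDml add0r pval_red. Qed.
Lemma paddN : left_inverse pzero popp padd.
Proof.
by move=> x; apply: padic_inj => n; rewrite !padic_ofE modzDml addNr mod0z.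
Qed.
Lemma pmulA : associative pmul.
Proof.
move=> x y z; apply: padic_inj => n; rewrite !padic_ofE.
by rewrite modzMml modzMmr mulrA.
Qed.
Lemma pmulC : commutative pmul.
Proof. by move=> x y; apply: padic_inj => n; rewrite !padic_ofE mulrC. Qed.
Lemma pmul1 : left_id pone pmul.
Proof.
by move=> x; apply: padic_inj => n; rewrite !padic_ofE modzMml mul1r pval_red.
Qed.
Lemma pmulDl : left_distributive pmul padd.
Proof.
move=> x y z; apply: padic_inj => n; rewrite !padic_ofE.
by rewrite modzMml modzDm mulrDl.
Qed.

End Padic.

HB.instance Definition _ p := gen_eqMixin (padic p).
HB.instance Definition _ p := gen_choiceMixin (padic p).
HB.instance Definition _ p :=
  GRing.isZmodule.Build (padic p) (@paddA p) (@paddC p) (@padd0 p) (@paddN p).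
HB.instance Definition _ p :=
  GRing.Zmodule_isComPzRing.Build (padic p) (@pmulA p) (@pmulC p) (@pmul1 p)
    (@pmulDl p).


Section LieLattices.
Variables (R : comPzRingType) (V : lmodType R) (br : V -> V -> V).

Definition is_Lie_bracket : Prop :=
  [/\ (forall a x y z, br (a *: x + y) z = a *: br x z + br y z),
      (forall a x y z, br x (a *: y + z) = a *: br x y + br x z),
      (forall x, br x x = 0) &
      (forall x y z, br x (br y z) + br y (br z x) + br z (br x y) = 0)].

Definition free_of_rank (S : V -> Prop) (n : nat) : Prop :=
  exists b : 'I_n -> V,
    [/\ (forall i, S (b i)),
        (forall c : 'I_n -> R, \sum_i c i *: b i = 0 -> forall i, c i = 0) &
        (forall x, S x -> exists c : 'I_n -> R, x = \sum_i c i *: b i)].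

Definition Lie_lattice (n : nat) : Prop :=
  is_Lie_bracket /\ free_of_rank (fun _ => True) n.

Definition derived (x : V) : Prop :=
  exists n (a : 'I_n -> R) (u v : 'I_n -> V), x = \sum_i a i *: br (u i) (v i).

Definition submodule (S : V -> Prop) : Prop :=
  [/\ S 0, (forall x y, S x -> S y -> S (x + y)) &
      (forall a x, S x -> S (a *: x))].

Definition subalgebra (M : V -> Prop) : Prop :=
  submodule M /\ (forall x y, M x -> M y -> M (br x y)).

Definition ideal (I : V -> Prop) : Prop :=
  submodule I /\ (forall x y, I x -> I (br x y)).

(* M has index k in V, i.e. the additive quotient group V/M has exactly
   k elements: there are k pairwise incongruent representatives mod M
   covering all cosets *)
Definition has_index (M : V -> Prop) (k : nat) : Prop :=
  exists s : k.-tuple V,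
    (forall i j : 'I_k, i != j -> ~ M (tnth s i - tnth s j)) /\
    (forall x, exists i : 'I_k, M (x - tnth s i)).

(* phi : M -> L is a homomorphism of Lie algebras (phi is given as a total
   function on V, only its values on M matter) *)
Definition Lie_hom_on (M : V -> Prop) (phi : V -> V) : Prop :=
  [/\ (forall x y, M x -> M y -> phi (x + y) = phi x + phi y),
      (forall a x, M x -> phi (a *: x) = a *: phi x) &
      (forall x y, M x -> M y -> phi (br x y) = br (phi x) (phi y))].

Definition virtual_endo (M : V -> Prop) (phi : V -> V) (k : nat) : Prop :=
  [/\ subalgebra M, has_index M k & Lie_hom_on M phi].

Definition dom_pow (M : V -> Prop) (phi : V -> V) (k : nat) (x : V) : Prop :=
  forall j, (j < k)%N -> M (iter j phi x).

Definition phi_invariant (M : V -> Prop) (phi : V -> V) (I : V -> Prop) :=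
  (forall k x, I x -> dom_pow M phi k x) /\ (forall x, I x -> I (phi x)).

Definition simple_virtual_endo (M : V -> Prop) (phi : V -> V) : Prop :=
  forall I, ideal I -> phi_invariant M phi I -> forall x, I x -> x = 0.

Definition self_similar (k : nat) : Prop :=
  exists (M : V -> Prop) (phi : V -> V),
    virtual_endo M phi k /\ simple_virtual_endo M phi.

End LieLattices.

(* Write [L, L] = Z_p w.  Every bracket is a multiple of w, [x, y] = beta(x, y) w, and L acts on
   the isolator W = {x | p^n x in Z_p w} of [L, L] through the character alpha = beta(-, w).
   In rank 3 the alternating form beta has a nonzero radical, so the centre Z(L) is nonzero.
   Given a virtual endomorphism phi : M -> L with [L : M] = p, a nonzero phi-invariant ideal
   inside M is found in each of three cases:
   - some central c lies outside M: then L = M + Z_p c, so [L, L] = [M, M] lies in M and phi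
     maps it into [L, L]; take Z_p w;
   - W lies in M: phi(p^2 w) lies in [phi(pL), phi(pL)], a multiple of w, so W is
     phi-invariant; take W;
   - otherwise pick u in W outside M and q = p u in W and M.  If phi q = 0 take Z_p q.  Else
     alpha (phi m) = alpha m on M, some m in M has alpha m <> 0, and the Jacobi identity for
     (phi z, y, phi m) shows that phi maps Z(L), which lies in M, into Z(L); take Z(L). *)

From mathcomp Require Import all_boot all_algebra ring boolp.
Set Implicit Arguments. Unset Strict Implicit. Unset Printing Implicit Defensive.
Import GRing.Theory.
Local Open Scope ring_scope.

Section PadicIntegers.
Variable p : nat.
Local Notation Zp := (padic p).

Lemma pval0 n : pval (0 : Zp) n = 0.
Proof. exact: mod0z. Qed.

Lemma pvalD (x y : Zp) n : pval (x + y) n = modz (pval x n + pval y n) (pmod p n).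
Proof. by []. Qed.

Lemma pvalM (x y : Zp) n : pval (x * y) n = modz (pval x n * pval y n) (pmod p n).
Proof. by []. Qed.

Lemma pval_natr k n : pval (k%:R : Zp) n = modz k%:Z (pmod p n).
Proof. by elim: k => [|k IHk] //; rewrite mulrS pvalD IHk modzDm intS. Qed.

Lemma pval_modz_le (x : Zp) k N : (k <= N)%N -> modz (pval x N) (pmod p k) = pval x k.
Proof.
move/subnKC <-; elim: (N - k)%N => [|d IHd]; first by rewrite addn0 pval_red.
by rewrite -IHd -(pvalP x (k + d)) addnS /pmod expnD PoszM modz_mulmod.
Qed.

Lemma modz_pmod_eq0 (m : int) k : (modz m (pmod p k) == 0) = (p ^ k %| `|m|)%N.
Proof. exact: (sameP eqP dvdz_mod0P). Qed.

Lemma padic_natr_unit d : coprime d p -> exists r : Zp, r * d%:R = 1.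
Proof.
move=> dp.
have gcd1 n : gcdz d%:Z (pmod p n) = 1.
  by apply/eqP; rewrite -/(coprimez _ _) coprimezE /pmod !absz_nat coprimeXr.
pose inv n := projT1 (Bezoutz d%:Z (pmod p n)).
have invP n : (inv n * d%:Z = 1 %[mod pmod p n])%Z.
  by rewrite /inv; case: Bezoutz => u [v /= uv]; rewrite -(gcd1 n) -uv addrC modzMDl.
have inv_compat n : (inv n.+1 = inv n %[mod pmod p n])%Z.
  have invP' : (inv n.+1 * d%:Z = 1 %[mod pmod p n])%Z.
    by rewrite -(modz_mulmod _ _ p%:Z) -pmodS invP pmodS modz_mulmod.
  rewrite -[inv n.+1]mulr1 -modzMmr -(invP n) modzMmr mulrCA.
  by rewrite -modzMmr invP' modzMmr mulr1.
exists (padic_of inv_compat); apply: padic_inj => n.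
by rewrite pvalM padic_ofE pval_natr modzMml modzMmr invP.
Qed.

Lemma padic1_neq0 : (1 < p)%N -> (1 : Zp) != 0.
Proof.
move=> p_gt1; apply/eqP => /(congr1 (fun x : Zp => pval x 1)).
by rewrite /= /pmod expn1 modz_small // mod0z.
Qed.

Lemma padic_natp_neq0 : (1 < p)%N -> (p%:R : Zp) != 0.
Proof.
move=> p_gt1; apply/eqP => /(congr1 (fun x : Zp => pval x 2)).
rewrite pval_natr /= /pmod modz_small; first by rewrite mod0z => -[p0]; rewrite p0 in p_gt1.
by rewrite le0z_nat ltz_nat expnS expn1 ltn_Pmulr // ltnW.
Qed.

Hypothesis p_prime : prime p.

Lemma padic_logn (x : Zp) : x != 0 ->
  exists v, forall N, (v < N)%N -> (0 < `|pval x N|)%N /\ logn p `|pval x N| = v.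
Proof.
move=> x_neq0.
have exn : exists n, pval x n != 0.
  apply: contrapT => all0; move/eqP: x_neq0; apply; apply: padic_inj => n.
  by rewrite pval0; apply: contrapT => xn; apply: all0; exists n; apply/eqP.
case: (ex_minnP exn) => n0 xn0 n0_min; exists n0.-1 => N ltN.
have n0_gt0 : (0 < n0)%N.
  by case: n0 xn0 {n0_min ltN} => //; rewrite -pval_red /pmod expn0 modz1.
have le_n0N : (n0 <= N)%N by rewrite -(prednK n0_gt0).
have ndvd : ~~ (p ^ n0 %| `|pval x N|)%N by rewrite -modz_pmod_eq0 pval_modz_le.
have dvd : (p ^ n0.-1 %| `|pval x N|)%N.
  rewrite -modz_pmod_eq0 pval_modz_le; last exact: leq_trans (leq_pred _) le_n0N.
  by apply: contraT => /n0_min; rewrite -{1}(prednK n0_gt0) ltnn.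
have xN_gt0 : (0 < `|pval x N|)%N by rewrite lt0n; apply: contra ndvd => /eqP ->.
split => //; move: ndvd dvd; rewrite !pfactor_dvdn // => ndvd dvd.
by apply/eqP; rewrite eqn_leq dvd andbT -ltnS prednK // ltnNge.
Qed.

Lemma padic_mulf_eq0 (x y : Zp) : (x * y == 0) = (x == 0) || (y == 0).
Proof.
apply/idP/idP; last by case/orP => /eqP ->; rewrite ?mul0r ?mulr0.
apply: contraLR; rewrite negb_or => /andP[/padic_logn[a Ha] /padic_logn[b Hb]].
have [xN_gt0 lxN] := Ha (a + b).+1 (leq_addr _ _).
have [yN_gt0 lyN] := Hb (a + b).+1 (leq_addl _ _).
apply/eqP => /(congr1 (fun z : Zp => pval z (a + b).+1)) /eqP.
rewrite pvalM pval0 modz_pmod_eq0 abszM pfactor_dvdn ?muln_gt0 ?xN_gt0 //.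
by rewrite lognM // lxN lyN ltnn.
Qed.

Lemma padic_integral_domain : GRing.integral_domain_axiom Zp.
Proof. by move=> x y /eqP; rewrite padic_mulf_eq0. Qed.

Lemma padic_expp_neq0 n : (p%:R : Zp) ^+ n != 0.
Proof.
have p_gt1 := prime_gt1 p_prime.
elim: n => [|n IHn]; first by rewrite expr0 padic1_neq0.
by rewrite exprS padic_mulf_eq0 negb_or padic_natp_neq0.
Qed.

End PadicIntegers.

Definition line (R : pzRingType) (V : lmodType R) (v x : V) : Prop :=
  exists c, x = c *: v.

Section Submodules.
Variables (R : comPzRingType) (V : lmodType R) (M : V -> Prop).
Hypothesis M_submod : submodule M.

Lemma submod0 : M 0. Proof. by case: M_submod. Qed.

Lemma submodD x y : M x -> M y -> M (x + y).
Proof. by case: M_submod => _ MD _; apply: MD. Qed.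

Lemma submodZ a x : M x -> M (a *: x).
Proof. by case: M_submod => _ _ MZ; apply: MZ. Qed.

Lemma submodB x y : M x -> M y -> M (x - y).
Proof. by move=> Mx My; rewrite -scaleN1r; apply/submodD/submodZ. Qed.

End Submodules.

Section LieBracket.
Variables (R : comPzRingType) (V : lmodType R) (br : V -> V -> V).
Hypothesis br_Lie : is_Lie_bracket br.

Definition centre (x : V) : Prop := forall y, br x y = 0.

Lemma br0l z : br 0 z = 0.
Proof.
case: br_Lie => brl _ _ _; have := brl (-1) 0 0 z.
by rewrite scaler0 addr0 scaleN1r addNr.
Qed.

Lemma br0r z : br z 0 = 0.
Proof.
case: br_Lie => _ brr _ _; have := brr (-1) z 0 0.
by rewrite scaler0 addr0 scaleN1r addNr.
Qed.

Lemma brZl a x z : br (a *: x) z = a *: br x z.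
Proof. by case: br_Lie => brl _ _ _; rewrite -[a *: x]addr0 brl br0l addr0. Qed.

Lemma brZr a x z : br z (a *: x) = a *: br z x.
Proof. by case: br_Lie => _ brr _ _; rewrite -[a *: x]addr0 brr br0r addr0. Qed.

Lemma brDl x y z : br (x + y) z = br x z + br y z.
Proof. by case: br_Lie => brl _ _ _; rewrite -[x]scale1r brl !scale1r. Qed.

Lemma brDr x y z : br z (x + y) = br z x + br z y.
Proof. by case: br_Lie => _ brr _ _; rewrite -[x]scale1r brr !scale1r. Qed.

Lemma brBl x y z : br (x - y) z = br x z - br y z.
Proof. by rewrite brDl -scaleN1r brZl scaleN1r. Qed.

Lemma brBr x y z : br z (x - y) = br z x - br z y.
Proof. by rewrite brDr -scaleN1r brZr scaleN1r. Qed.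

Lemma br_anticomm x y : br y x = - br x y.
Proof.
case: br_Lie => _ _ brxx _; apply/eqP; rewrite -addr_eq0.
by have := brxx (x + y); rewrite brDl !brDr !brxx add0r addr0 addrC => ->.
Qed.

Lemma br_jacobi x y z : br x (br y z) + br y (br z x) + br z (br x y) = 0.
Proof. by case: br_Lie. Qed.

Lemma brsumr (I : finType) (F : I -> V) y : br y (\sum_i F i) = \sum_i br y (F i).
Proof. by apply: big_morph; [move=> ? ?; exact: brDr | exact: br0r]. Qed.

Lemma brsuml (I : finType) (F : I -> V) y : br (\sum_i F i) y = \sum_i br (F i) y.
Proof. by apply: (big_morph (br^~ y)); [move=> ? ?; exact: brDl | exact: br0l]. Qed.

Lemma ideal_centre : ideal br centre.
Proof.
split; first split.
- by move=> y; rewrite br0l.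
- by move=> x y Cx Cy z; rewrite brDl Cx Cy addr0.
- by move=> a x Cx z; rewrite brZl Cx scaler0.
by move=> x y Cx z; rewrite Cx br0l.
Qed.

Lemma ideal_line v : (forall y, exists c, br v y = c *: v) -> ideal br (line v).
Proof.
move=> brv; split; first split.
- by exists 0; rewrite scale0r.
- by move=> _ _ [c ->] [d ->]; exists (c + d); rewrite scalerDl.
- by move=> a _ [c ->]; exists (a * c); rewrite scalerA.
by move=> _ y [c ->]; have [d vy] := brv y; exists (c * d); rewrite brZl vy scalerA.
Qed.

End LieBracket.

Definition torsion_free (R : pzRingType) (V : lmodType R) : Prop :=
  forall (a : R) (v : V), a *: v = 0 -> a = 0 \/ v = 0.

Lemma free_torsion_free (R : comPzRingType) (V : lmodType R) n :
  GRing.integral_domain_axiom R -> free_of_rank (fun _ : V => True) n -> torsion_free V.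
Proof.
move=> R_domain [e [_ e_indep e_span]] a v av0.
have [c vE] := e_span v I; have [->|a_neq0] := eqVneq a 0; [by left | right].
have /e_indep ac0 : \sum_i (a * c i) *: e i = 0.
  by under eq_bigr do rewrite -scalerA; rewrite -scaler_sumr -vE.
rewrite vE big1 // => i _; have /orP[a0|/eqP->] := R_domain _ _ (ac0 i); last exact: scale0r.
by rewrite a0 in a_neq0.
Qed.

Lemma free_rank1_line (R : comPzRingType) (V : lmodType R) (S : V -> Prop) :
  (1 : R) != 0 -> free_of_rank S 1 -> exists w, [/\ w != 0, S w & forall x, S x -> line w x].
Proof.
move=> R_nontrivial [b [Sb b_indep b_span]]; exists (b ord0); split => //.
- apply: contra R_nontrivial => /eqP b0; apply/eqP.
  by apply: (b_indep (fun=> 1) _ ord0); rewrite big_ord1 b0 scaler0.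
by move=> x /b_span [c ->]; exists (c ord0); rewrite big_ord1.
Qed.

Section PrimeIndex.
Variable p : nat.
Hypothesis p_prime : prime p.
Variables (V : lmodType (padic p)) (M : V -> Prop).
Hypotheses (M_submod : submodule M) (M_index : has_index M p).

Lemma index_natr_scale d x : (0 < d < p)%N -> M (d%:R *: x) -> M x.
Proof.
case/andP=> d_gt0 d_lt_p Mdx.
have [r rd] : exists r : padic p, r * d%:R = 1.
  by apply: padic_natr_unit; rewrite coprime_sym prime_coprime // gtnNdvd.
by rewrite -[x]scale1r -rd -scalerA; apply: submodZ.
Qed.

Lemma index_cover x : ~ M x -> forall y, exists k, (k < p)%N /\ M (y - k%:R *: x).
Proof.
move=> Mx_not; case: M_index => s [_ s_cover].
(* k |-> (coset of k x) is injective on 'I_p, hence onto the p cosets of M. *)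
have [f fP] := fin_all_exists (fun k : 'I_p => s_cover (k%:R *: x)).
have f_lt (k l : 'I_p) : (k < l)%N -> f k = f l -> False.
  move=> lt_kl fkl; apply: Mx_not; apply: (@index_natr_scale (l - k)).
    by rewrite subn_gt0 lt_kl (leq_ltn_trans (leq_subr k l)).
  suff -> : (l - k)%:R *: x = (l%:R *: x - tnth s (f l)) - (k%:R *: x - tnth s (f k)).
    exact: submodB.
  by rewrite fkl opprB addrA subrK (natrB _ (ltnW lt_kl)) scalerBl.
have f_inj : injective f.
  move=> k l fkl; case: (ltngtP k l) => [lt_kl|lt_lk|/val_inj //].
  - by case: (f_lt _ _ lt_kl fkl).
  - by case: (f_lt _ _ lt_lk (esym fkl)).
move=> y; have [i yi] := s_cover y; have /codomP[k iE] := injF_onto f_inj i.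
rewrite {}iE in yi; exists k; split => //.
suff -> : y - k%:R *: x = (y - tnth s (f k)) - (k%:R *: x - tnth s (f k)) by exact: submodB.
by rewrite opprB addrA subrK.
Qed.

Lemma index_scale_p x : M (p%:R *: x).
Proof.
have [Mx|Mx_not] := pselect (M x); first exact: submodZ.
have [[|k] [lt_kp Mpk]] := index_cover Mx_not (p%:R *: x).
  by rewrite scale0r subr0 in Mpk.
case: Mx_not; apply: (@index_natr_scale (p - k.+1)).
  by rewrite subn_gt0 lt_kp ltn_subrL /= (prime_gt0 p_prime).
by rewrite (natrB _ (ltnW lt_kp)) scalerBl.
Qed.

End PrimeIndex.

Section RankOneDerived.
Variable p : nat.
Hypothesis p_prime : prime p.
Local Notation R := (padic p).
Variables (V : lmodType R) (br : V -> V -> V).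
Hypothesis br_Lie : is_Lie_bracket br.
Hypothesis V_torsion_free : torsion_free V.
Variable w : V.
Hypotheses (w_neq0 : w != 0) (w_derived : derived br w)
  (derived_line : forall x, derived br x -> line w x).

Lemma cancel_scalar (a : R) (u v : V) : a != 0 -> a *: u = a *: v -> u = v.
Proof.
move=> a_neq0 /eqP; rewrite -subr_eq0 -scalerBr => /eqP /V_torsion_free [a0|].
  by rewrite a0 eqxx in a_neq0.
by move/eqP; rewrite subr_eq0 => /eqP.
Qed.

Lemma cancel_vector (c d : R) (v : V) : v != 0 -> c *: v = d *: v -> c = d.
Proof.
move=> v_neq0 /eqP; rewrite -subr_eq0 -scalerBl => /eqP /V_torsion_free [|v0].
  by move/eqP; rewrite subr_eq0 => /eqP.
by rewrite v0 eqxx in v_neq0.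
Qed.

Lemma br_line x y : line w (br x y).
Proof.
apply: derived_line; exists 1%N, (fun=> 1), (fun=> x), (fun=> y).
by rewrite big_ord1 scale1r.
Qed.

Definition beta x y : R := projT1 (cid (br_line x y)).

Lemma betaE x y : br x y = beta x y *: w.
Proof. exact: projT2 (cid (br_line x y)). Qed.

Definition alpha y : R := beta y w.

Lemma alphaZ a y : alpha (a *: y) = a * alpha y.
Proof. by apply: (cancel_vector w_neq0); rewrite -betaE (brZl br_Lie) betaE scalerA. Qed.

Definition isolator (x : V) : Prop := exists n c, p%:R ^+ n *: x = c *: w.

Lemma isolatorZ a x : isolator x -> isolator (a *: x).
Proof.
case=> n [c xE]; exists n, (a * c).
by rewrite scalerA (mulrC _ a) -[(a * _) *: x]scalerA xE scalerA.
Qed.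

Lemma isolator_br y v : isolator v -> br y v = alpha y *: v.
Proof.
case=> n [c vE]; apply: (cancel_scalar (padic_expp_neq0 p_prime n)).
rewrite -(brZr br_Lie) vE (brZr br_Lie) betaE -/(alpha y) scalerA mulrC -scalerA.
by rewrite vE !scalerA mulrC.
Qed.

Lemma ideal_isolator : ideal br isolator.
Proof.
split; first split.
- by exists 0%N, 0; rewrite scaler0 scale0r.
- move=> x y [n [c xE]] [m [d yE]].
  exists (n + m)%N, (p%:R ^+ m * c + p%:R ^+ n * d).
  by rewrite exprD scalerDr {1}mulrC -!scalerA xE yE !scalerA scalerDl.
- by move=> a x; apply: isolatorZ.
by move=> x y Ix; rewrite (br_anticomm br_Lie) isolator_br // -scaleNr; apply: isolatorZ.
Qed.

Lemma centre_of_commuting x v :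
  alpha x = 0 -> br x v = 0 -> alpha v != 0 -> centre br x.
Proof.
move=> ax0 xv0 av_neq0 y; have := br_jacobi br_Lie x y v.
rewrite (betaE y v) (brZr br_Lie) betaE -/(alpha x) ax0 scale0r scaler0 add0r.
rewrite (br_anticomm br_Lie x v) xv0 oppr0 (br0r br_Lie) add0r.
rewrite (betaE x y) (brZr br_Lie) betaE -/(alpha v) scalerA => J.
have /eqP : beta x y * alpha v = 0 by apply: (cancel_vector w_neq0); rewrite J scale0r.
by rewrite padic_mulf_eq0 // (negbTE av_neq0) orbF => /eqP ->; rewrite scale0r.
Qed.

Lemma beta_anticomm x y : beta y x = - beta x y.
Proof.
by apply: (cancel_vector w_neq0); rewrite -betaE (br_anticomm br_Lie) betaE scaleNr.
Qed.

Lemma beta_xx x : beta x x = 0.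
Proof. by apply: (cancel_vector w_neq0); rewrite -betaE scale0r; case: br_Lie. Qed.

Lemma basis_beta_neq0 n (e : 'I_n -> V) :
  (forall x, exists c, x = \sum_i c i *: e i) -> exists i j, beta (e i) (e j) != 0.
Proof.
move=> e_span; apply: contrapT => beta_neq0; move/eqP: w_neq0; apply.
have beta0 i j : beta (e i) (e j) = 0.
  by apply: contrapT => /eqP bij; apply: beta_neq0; exists i, j.
have br0 x y : br x y = 0.
  have [c ->] := e_span x; have [d ->] := e_span y.
  rewrite (brsuml br_Lie) big1 // => i _; rewrite (brZl br_Lie) (brsumr br_Lie).
  by rewrite big1 ?scaler0 // => j _; rewrite (brZr br_Lie) betaE beta0 scale0r scaler0.
case: w_derived => n' [a [u [v ->]]].
by rewrite big1 // => i _; rewrite br0 scaler0.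
Qed.

Lemma rank3_centre_neq0 :
  free_of_rank (fun _ : V => True) 3 -> exists z, z != 0 /\ centre br z.
Proof.
case=> e [_ e_indep e_span].
pose i0 : 'I_3 := @Ordinal 3 0 isT; pose i1 : 'I_3 := @Ordinal 3 1 isT.
pose i2 : 'I_3 := @Ordinal 3 2 isT.
have ord3 (k : 'I_3) : [\/ k = i0, k = i1 | k = i2].
  by case: k => [[|[|[|//]]] ?]; [constructor 1|constructor 2|constructor 3];
    exact: val_inj.
have sum3 (F : 'I_3 -> V) : \sum_i F i = F i0 + F i1 + F i2.
  by rewrite !big_ord_recr big_ord0 /= add0r; congr (F _ + F _ + F _); exact: val_inj.
(* The structure constants (beta_12, beta_20, beta_01) span the radical of beta. *)
pose z := beta (e i1) (e i2) *: e i0 + beta (e i2) (e i0) *: e i1 + beta (e i0) (e i1) *: e i2.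
exists z; split.
- have [i [j bij]] := basis_beta_neq0 (fun x => e_span x I).
  apply: contra bij => /eqP z0.
  pose c k := if k == i0 then beta (e i1) (e i2) else if k == i1 then beta (e i2) (e i0)
    else beta (e i0) (e i1).
  have /e_indep c0 : \sum_k c k *: e k = 0 by rewrite sum3 /c /i0 /i1 /i2 /= -z0.
  have := c0 i0; have := c0 i1; have := c0 i2; rewrite /c /i0 /i1 /i2 /= => b01 b20 b12.
  (* each beta (e i) (e j) is 0 or one of the three constants, up to sign *)
  by case: (ord3 i) (ord3 j) => -> [] ->; first [by rewrite beta_xx | by rewrite ?b01 ?b20 ?b12
    | by rewrite beta_anticomm ?b01 ?b20 ?b12 oppr0].
move=> y; have [d ->] := e_span y I; rewrite (brsumr br_Lie) big1 // => k _.
rewrite (brZr br_Lie); suff -> : br z (e k) = 0 by rewrite scaler0.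
rewrite !(brDl br_Lie) !(brZl br_Lie) !betaE !scalerA -!scalerDl -(scale0r w).
congr (_ *: w); case: (ord3 k) => ->.
- by rewrite beta_xx (beta_anticomm (e i0) (e i1)); ring.
- by rewrite beta_xx (beta_anticomm (e i1) (e i2)); ring.
by rewrite beta_xx (beta_anticomm (e i2) (e i0)); ring.
Qed.

Definition derived_of (S : V -> Prop) (x : V) : Prop :=
  exists n (a : 'I_n -> R) (u v : 'I_n -> V),
    (forall i, S (u i) /\ S (v i)) /\ x = \sum_i a i *: br (u i) (v i).

Section SimpleVirtualEndomorphism.
Variables (M : V -> Prop) (phi : V -> V).
Hypotheses (M_subalg : subalgebra br M) (M_index : has_index M p).
Hypotheses (phi_hom : Lie_hom_on br M phi) (phi_simple : simple_virtual_endo br M phi).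

Let M_submod : submodule M := proj1 M_subalg.

Lemma subalg_br x y : M x -> M y -> M (br x y).
Proof. by case: M_subalg => _; apply. Qed.

Lemma phiD x y : M x -> M y -> phi (x + y) = phi x + phi y.
Proof. by case: phi_hom => phi_add _ _; apply: phi_add. Qed.

Lemma phiZ a x : M x -> phi (a *: x) = a *: phi x.
Proof. by case: phi_hom => _ phi_scale _; apply: phi_scale. Qed.

Lemma phi_br x y : M x -> M y -> phi (br x y) = br (phi x) (phi y).
Proof. by case: phi_hom => _ _ phi_bracket; apply: phi_bracket. Qed.

Lemma phi0 : phi 0 = 0.
Proof. by rewrite -(scale0r 0) phiZ ?scale0r //; apply: submod0. Qed.

Lemma invariant_ideal_trivial I : ideal br I -> (forall x, I x -> M x) ->
  (forall x, I x -> I (phi x)) -> forall x, I x -> x = 0.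
Proof.
move=> I_ideal IM I_phi; apply: phi_simple => //; split => // k x Ix j _.
by apply: IM; elim: j => // j IHj; rewrite iterS; apply: I_phi.
Qed.

Lemma derived_of_phi x : derived_of M x -> M x /\ line w (phi x).
Proof.
case=> n [a [u [v [Muv ->]]]].
have [MS ->] : M (\sum_i a i *: br (u i) (v i)) /\
    phi (\sum_i a i *: br (u i) (v i)) = \sum_i a i *: br (phi (u i)) (phi (v i)).
  apply: (big_rec2 (fun s t => M s /\ phi s = t)) => [|i s _ _ [Ms <-]].
    by split; [apply: submod0 | apply: phi0].
  have [Mu Mv] := Muv i; have Mb := subalg_br Mu Mv.
  have Mab : M (a i *: br (u i) (v i)) by apply: submodZ.
  by split; [apply: submodD | rewrite phiD // phiZ // phi_br].
split => //; apply: derived_line.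
by exists n, a, (fun i => phi (u i)), (fun i => phi (v i)).
Qed.

Lemma derived_of_centre c : centre br c -> ~ M c -> forall x, derived br x -> derived_of M x.
Proof.
move=> c_centre Mc_not x [n [a [u [v ->]]]].
(* Shift each u i, v i into M by a multiple of c; the brackets do not change. *)
have [k kP] := fin_all_exists (fun i => index_cover p_prime M_submod M_index Mc_not (u i)).
have [l lP] := fin_all_exists (fun i => index_cover p_prime M_submod M_index Mc_not (v i)).
exists n, a, (fun i => u i - (k i)%:R *: c), (fun i => v i - (l i)%:R *: c).
split=> [i|]; first by split; [case: (kP i) | case: (lP i)].
apply: eq_bigr => i _; congr (_ *: _).
rewrite (brBl br_Lie) !(brBr br_Lie) !(brZl br_Lie) !(brZr br_Lie).
by rewrite !c_centre !(br_anticomm br_Lie c) !c_centre !oppr0 !scaler0 !subr0.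
Qed.

Lemma centre_in_domain c : centre br c -> M c.
Proof.
move=> c_centre; apply: contrapT => Mc_not.
have [Mw [d phiw]] := derived_of_phi (derived_of_centre c_centre Mc_not w_derived).
have w0 := invariant_ideal_trivial (ideal_line br_Lie (fun y => ex_intro _ _ (betaE w y))).
move/eqP: w_neq0; apply; apply: w0; last by exists 1; rewrite scale1r.
- by move=> _ [a ->]; apply: submodZ.
by move=> _ [a ->]; exists (a * d); rewrite phiZ // phiw scalerA.
Qed.

Lemma isolator_phi x : isolator x -> M x -> isolator (phi x).
Proof.
move=> [n [c xE]] Mx.
(* p^2 w is a combination of brackets of elements of p L, which lies in M. *)
have [Mpw [d phi_pw]] : M (p%:R ^+ 2 *: w) /\ line w (phi (p%:R ^+ 2 *: w)).
  apply: derived_of_phi; case: w_derived => k [a [u [v wE]]].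
  exists k, a, (fun i => p%:R *: u i), (fun i => p%:R *: v i).
  split=> [i|]; first by split; apply: index_scale_p.
  rewrite wE scaler_sumr; apply: eq_bigr => i _.
  by rewrite (brZl br_Lie) (brZr br_Lie) !scalerA expr2 [_ * a i]mulrC mulrA.
exists (n + 2)%N, (c * d); rewrite -phiZ //.
have -> : p%:R ^+ (n + 2) *: x = c *: (p%:R ^+ 2 *: w).
  by rewrite scalerA mulrC -scalerA -xE scalerA -exprD addnC.
by rewrite phiZ // phi_pw scalerA.
Qed.

Lemma isolator_not_in_domain : exists u, isolator u /\ ~ M u.
Proof.
apply: contrapT => all_in.
have I_M x : isolator x -> M x.
  by move=> Ix; apply: contrapT => Mx_not; apply: all_in; exists x.
have w0 := invariant_ideal_trivial ideal_isolator I_M (fun x Ix => isolator_phi Ix (I_M x Ix)).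
by move/eqP: w_neq0; apply; apply: w0; exists 0%N, 1; rewrite expr0 !scale1r.
Qed.

Lemma phi_isolator_neq0 q : M q -> isolator q -> q != 0 -> phi q != 0.
Proof.
move=> Mq Iq q_neq0; apply: contra q_neq0 => /eqP phiq0; apply/eqP.
have brq y : exists c, br q y = c *: q.
  by exists (- alpha y); rewrite (br_anticomm br_Lie) isolator_br // scaleNr.
apply: (invariant_ideal_trivial (ideal_line br_Lie brq)); last by exists 1; rewrite scale1r.
- by move=> _ [a ->]; apply: submodZ.
by move=> _ [a ->]; exists 0; rewrite phiZ // phiq0 scaler0 scale0r.
Qed.

Lemma alpha_phi q m : M q -> isolator q -> phi q != 0 -> M m -> alpha (phi m) = alpha m.
Proof.
move=> Mq Iq phiq_neq0 Mm; apply: (cancel_vector phiq_neq0).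
rewrite -isolator_br; last exact: isolator_phi.
by rewrite -phi_br // isolator_br // phiZ.
Qed.

Lemma phi_centre q m x : M q -> isolator q -> phi q != 0 -> M m -> alpha m != 0 ->
  centre br x -> M x -> centre br (phi x).
Proof.
move=> Mq Iq phiq_neq0 Mm am_neq0 x_centre Mx.
have phi_comm y : M y -> br (phi x) (phi y) = 0.
  by move=> My; rewrite -phi_br // x_centre phi0.
apply: (centre_of_commuting (v := phi m)); last by rewrite (alpha_phi Mq Iq).
  apply: (cancel_vector phiq_neq0).
  by rewrite scale0r -isolator_br ?phi_comm //; exact: isolator_phi.
exact: phi_comm.
Qed.

Lemma centre_trivial z : centre br z -> z = 0.
Proof.
have p_gt1 := prime_gt1 p_prime.
have [u [Iu Mu_not]] := isolator_not_in_domain.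
have Mq : M (p%:R *: u) := index_scale_p p_prime M_submod M_index u.
have Iq : isolator (p%:R *: u) := isolatorZ _ Iu.
have q_neq0 : p%:R *: u != 0.
  apply/eqP => /V_torsion_free [p0|u0]; first by move/eqP: (padic_natp_neq0 p_gt1).
  by apply: Mu_not; rewrite u0; apply: submod0.
have phiq_neq0 := phi_isolator_neq0 Mq Iq q_neq0.
have [y ay_neq0] : exists y, alpha y != 0.
  apply: contrapT => alpha0; apply: Mu_not; apply: centre_in_domain => y.
  rewrite (br_anticomm br_Lie) isolator_br //.
  by case: (eqVneq (alpha y) 0) => [->|ay]; [rewrite scale0r oppr0 | case: alpha0; exists y].
have apy_neq0 : alpha (p%:R *: y) != 0.
  by rewrite alphaZ padic_mulf_eq0 // negb_or padic_natp_neq0.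
have My := index_scale_p p_prime M_submod M_index y.
apply: (invariant_ideal_trivial (ideal_centre br_Lie) centre_in_domain) => x x_centre.
exact: phi_centre Mq Iq phiq_neq0 My apy_neq0 x_centre (centre_in_domain x_centre).
Qed.

End SimpleVirtualEndomorphism.

Lemma centre_neq0_not_self_similar z : z != 0 -> centre br z -> ~ self_similar br p.
Proof.
move=> z_neq0 z_centre [M [phi [[M_subalg M_index phi_hom] phi_simple]]].
by move/eqP: z_neq0; apply; exact: (centre_trivial M_subalg M_index phi_hom phi_simple z_centre).
Qed.

End RankOneDerived.

Local Close Scope ring_scope.

Theorem proposition1p13 (p : nat) (p_prime : prime p)
  (V : lmodType (padic p)) (br : V -> V -> V) :
  Lie_lattice br 3 -> free_of_rank (derived br) 1 -> ~ self_similar br p.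
Proof.
move=> [br_Lie L_free] derived_free.
have V_torsion_free := free_torsion_free (padic_integral_domain p_prime) L_free.
have [w [w_neq0 w_derived derived_line]] :=
  free_rank1_line (padic1_neq0 (prime_gt1 p_prime)) derived_free.
have [z [z_neq0 z_centre]] :=
  rank3_centre_neq0 br_Lie V_torsion_free w_neq0 w_derived derived_line L_free.
exact: (centre_neq0_not_self_similar p_prime br_Lie V_torsion_free w_neq0 w_derived
  derived_line z_neq0 z_centre).
Qed.
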